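(* Let $G$ be a DAG and $k,r,L$ positive integers. Suppose that every SPP pebbling strategy of $G$ with fast memory of size $k\cdot r$ uses at least $L$ I/O operations. Then every MPP pebbling strategy of $G$ with $k$ processors, each having fast memory of size $r$, contains at least $L/k$ I/O steps (applications of rules (R1) and (R2)).
   Context: Single-processor red-blue pebbling (SPP) with fast memory size $r$ on a DAG $G=(V,E)$: a state is a pair $(R,B)$ of subsets of $V$ (red and blue pebbles), starting with both empty. Rules: (R1-S) place a red pebble on a node carrying a blue pebble; (R2-S) place a blue pebble on a node carrying a red pebble; (R3-S) place a red pebble on a node all of whose in-neighbors carry red pebbles (in particular on any source); (R4-S) remove any pebble. At all times $|R|\le r$; a strategy must end in a state where every sink carries a pebble. Its I/O cost is the number of applications of (R1-S) and (R2-S). Multiprocessor red-blue pebbling (MPP). Input: a DAG $G=(V,E)$ with $n=|V|$ and positive integers $k$ (number of processors), $r$ (fast-memory size per processor), $g$ (cost of an I/O step). $\Delta_{in}$ denotes the maximum in-degree of $G$; sources/sinks are nodes of in-degree/out-degree $0$. A configuration is a tuple $(R^1,\dots,R^k,B)$ of subsets of $V$ ($R^j$ = nodes carrying a red pebble of processor $j$, $B$ = nodes carrying a blue pebble); it is valid if $|R^j|\le r$ for all $j$. The initial configuration has all sets empty; a configuration is terminal if every sink lies in $B\cup\bigcup_j R^j$. The transition rules are: (R1) for some $m\le k$, pairwise distinct processors $j_1,\dots,j_m$ and nodes $v_1,\dots,v_m$ with $v_i\in R^{j_i}$, add each $v_i$ to $B$ (cost $g$); (R2) for some $m\le k$, pairwise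 distinct processors $j_1,\dots,j_m$ and nodes $v_1,\dots,v_m\in B$, add each $v_i$ to $R^{j_i}$ (cost $g$); (R3) for some $m\le k$, pairwise distinct processors $j_1,\dots,j_m$ and nodes $v_1,\dots,v_m$ such that every in-neighbor of $v_i$ lies in $R^{j_i}$, add each $v_i$ to $R^{j_i}$ (cost $1$); (R4) remove a single red or blue pebble (cost $0$). A pebbling strategy is a sequence of valid configurations starting at the initial configuration and ending at a terminal one, each obtained from its predecessor by one rule; its cost is the sum of the costs of the rules applied. $\mathrm{OPT}$ denotes the minimum cost of a pebbling strategy. Applications of (R1),(R2) are called I/O steps and applications of (R3) compute steps. *)

From mathcomp Require Import all_boot all_order all_algebra.
Set Implicit Arguments. Unset Strict Implicit. Unset Printing Implicit Defensive.

Section Pebbling.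
Variables (V : finType) (e : rel V).

Definition dag : Prop :=
  forall (x : V) (p : seq V), p != [::] -> path e x p -> last x p != x.

Definition sink (v : V) : bool := [forall w, ~~ e v w].
Definition preds_in (v : V) (A : {set V}) : bool := [forall u, e u v ==> (u \in A)].

Definition sstate := ({set V} * {set V})%type.

Inductive smove :=
| SLoad of V
| SStore of V
| SComp of V
| SDelR of V
| SDelB of V.

Definition spp_step (st : sstate) (m : smove) : option sstate :=
  let: (R, B) := st in
  match m with
  | SLoad v => if v \in B then Some (v |: R, B) else None
  | SStore v => if v \in R then Some (R, v |: B) else None
  | SComp v => if preds_in v R then Some (v |: R, B) else None
  | SDelR v => if v \in R then Some (R :\ v, B) else None
  | SDelB v => if v \in B then Some (R, B :\ v) else None
  end.

Fixpoint spp_run (r : nat) (st : sstate) (ms : seq smove) : option sstate :=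
  match ms with
  | [::] => Some st
  | m :: ms' =>
      match spp_step st m with
      | Some st' => if #|st'.1| <= r then spp_run r st' ms' else None
      | None => None
      end
  end.

Definition sterminal (st : sstate) : bool :=
  [forall v, sink v ==> (v \in st.1 :|: st.2)].

Definition spp_strategy (r : nat) (ms : seq smove) : bool :=
  if spp_run r (set0, set0) ms is Some st then sterminal st else false.

Definition sis_io (m : smove) : bool :=
  match m with SLoad _ | SStore _ => true | _ => false end.

Definition spp_io (ms : seq smove) : nat := count sis_io ms.

Variable k : nat.

Definition mconf := ({ffun 'I_k -> {set V}} * {set V})%type.

(* A parallel step is given by a partial assignment processor -> node; the
   processors j with f j = Some v are the pairwise distinct j_1..j_m (m >= 1). *)
Inductive mmove :=
| MStore of {ffun 'I_k -> option V}
| MLoad of {ffun 'I_k -> option V}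
| MComp of {ffun 'I_k -> option V}
| MDelR of 'I_k & V
| MDelB of V.

Definition nonempty_sel (f : {ffun 'I_k -> option V}) : bool :=
  [exists j, f j != None].

Definition sel_ok (f : {ffun 'I_k -> option V}) (P : 'I_k -> V -> bool) : bool :=
  [forall j, if f j is Some v then P j v else true].

Definition add_red (R : {ffun 'I_k -> {set V}}) (f : {ffun 'I_k -> option V}) :=
  [ffun j => if f j is Some v then v |: R j else R j].

Definition mpp_step (c : mconf) (m : mmove) : option mconf :=
  let: (R, B) := c in
  match m with
  | MStore f =>
      if nonempty_sel f && sel_ok f (fun j v => v \in R j)
      then Some (R, B :|: [set v | [exists j, f j == Some v]]) else None
  | MLoad f =>
      if nonempty_sel f && sel_ok f (fun _ v => v \in B)
      then Some (add_red R f, B) else None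
  | MComp f =>
      if nonempty_sel f && sel_ok f (fun j v => preds_in v (R j))
      then Some (add_red R f, B) else None
  | MDelR j v =>
      if v \in R j then Some ([ffun i => if i == j then R i :\ v else R i], B)
      else None
  | MDelB v => if v \in B then Some (R, B :\ v) else None
  end.

Definition mvalid (r : nat) (c : mconf) : bool := [forall j, #|c.1 j| <= r].

Fixpoint mpp_run (r : nat) (c : mconf) (ms : seq mmove) : option mconf :=
  match ms with
  | [::] => Some c
  | m :: ms' =>
      match mpp_step c m with
      | Some c' => if mvalid r c' then mpp_run r c' ms' else None
      | None => None
      end
  end.

Definition minit : mconf := ([ffun _ => set0], set0).

Definition mterminal (c : mconf) : bool :=
  [forall v, sink v ==> ((v \in c.2) || [exists j, v \in c.1 j])].

Definition mpp_strategy (r : nat) (ms : seq mmove) : bool :=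
  if mpp_run r minit ms is Some c then mterminal c else false.

Definition mis_io (m : mmove) : bool :=
  match m with MStore _ | MLoad _ => true | _ => false end.

Definition mpp_io (ms : seq mmove) : nat := count mis_io ms.

End Pebbling.

From mathcomp Require Import all_boot all_order all_algebra.
Import GRing.Theory Num.Theory.

(* A single processor with fast memory k * r simulates k processors with fast
   memory r each by holding the union of their red pebbles.  A parallel step
   moving m <= k pebbles becomes at most m sequential steps of the same kind
   (a red deletion becomes at most one), so every parallel I/O step costs at
   most k sequential I/O operations. *)

Set Implicit Arguments.
Unset Strict Implicit.

Section Simulation.
Variables (V : finType) (e : rel V) (k : nat).

Definition pooled_red (R : {ffun 'I_k -> {set V}}) : {set V} :=
  \bigcup_(j : 'I_k) R j.

Definition selected (f : {ffun 'I_k -> option V}) : seq V :=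
  pmap (fun j => f j) (enum 'I_k).

Lemma mem_selected f x : (x \in selected f) = [exists j, f j == Some x].
Proof.
rewrite mem_pmap; apply/mapP/existsP => [[j _ fj]|[j /eqP fj]].
  by exists j; rewrite -fj.
by exists j; rewrite ?mem_enum ?fj.
Qed.

Lemma size_selected f : size (selected f) <= k.
Proof.
by rewrite size_pmap (leq_trans (count_size _ _)) ?size_enum_ord.
Qed.

Lemma pooled_red_add_red R f :
  pooled_red (add_red R f) = pooled_red R :|: [set x in selected f].
Proof.
apply/setP=> x; rewrite in_setU inE mem_selected; apply/bigcupP/orP.
  case=> j _; rewrite ffunE; case fj: (f j) => [v|] xR; last first.
    by left; apply/bigcupP; exists j.
  case/setU1P: xR => [->|xR]; last by left; apply/bigcupP; exists j.
  by right; apply/existsP; exists j; rewrite fj.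
case=> [/bigcupP[j _ xR] | /existsP[j /eqP fj]]; exists j => //; rewrite ffunE.
  by case: (f j) => // v; rewrite inE xR orbT.
by rewrite fj setU11.
Qed.

Lemma card_pooled_red r (c : mconf V k) : mvalid r c -> #|pooled_red c.1| <= k * r.
Proof.
move=> /forallP valid_c.
have card_bigcup : #|pooled_red c.1| <= \sum_(j : 'I_k) #|c.1 j|.
  apply: (big_ind2 (fun (A : {set V}) n => #|A| <= n)); rewrite ?cards0 //.
  by move=> A a B b hA hB; rewrite (leq_trans (leq_card_setU _ _)) ?leq_add.
rewrite (leq_trans card_bigcup) // -[k in k * r]card_ord -sum_nat_const.
exact: leq_sum.
Qed.

Lemma spp_run_cat c st ms1 ms2 st1 :
  spp_run e c st ms1 = Some st1 -> spp_run e c st (ms1 ++ ms2) = spp_run e c st1 ms2.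
Proof.
elim: ms1 st => [|m ms IH] st /=; first by case=> ->.
by case: (spp_step e st m) => // st'; case: ifP => // _; apply: IH.
Qed.

Lemma preds_in_subset v (R R' : {set V}) :
  R \subset R' -> preds_in e v R -> preds_in e v R'.
Proof.
move=> /subsetP sRR' /forallP predsR; apply/forallP=> u.
by apply/implyP=> /(implyP (predsR u)); apply: sRR'.
Qed.

(* Covers both loads and computations: [P A v] says that [g v] may be played
   on red set [A], and it stays true as red pebbles are added. *)
Lemma spp_run_add_red c (g : V -> smove V) (P : {set V} -> V -> bool) l (R B : {set V}) :
    (forall (A : {set V}) v, P A v -> spp_step e (A, B) (g v) = Some (v |: A, B)) ->
    (forall A A' : {set V}, forall v, A \subset A' -> P A v -> P A' v) ->
    {in l, forall v, P R v} -> #|R :|: [set x in l]| <= c ->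
  spp_run e c (R, B) (map g l) = Some (R :|: [set x in l], B).
Proof.
move=> step_g P_mono; elim: l R => [|v l IH] R Pl card_l; cbn [spp_run map].
  by congr (Some (_, _)); apply/setP=> x; rewrite !inE orbF.
have setU1_l : v |: R :|: [set x in l] = R :|: [set x in v :: l].
  by apply/setP=> x; rewrite !inE orbCA orbA.
rewrite step_g ?Pl ?mem_head //= IH ?setU1_l //; last first.
  by move=> x xl; apply: (P_mono R); rewrite ?subsetUr ?Pl // inE xl orbT.
by rewrite (leq_trans _ card_l) // subset_leq_card // -setU1_l subsetUl.
Qed.

Lemma spp_run_store c l (R B : {set V}) : {subset l <= R} -> #|R| <= c ->
  spp_run e c (R, B) (map (@SStore V) l) = Some (R, B :|: [set x in l]).
Proof.
elim: l B => [|v l IH] B /= lR card_R.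
  by congr (Some (_, _)); apply/setP=> x; rewrite !inE orbF.
rewrite lR ?mem_head //= card_R IH //; last by move=> x xl; rewrite lR // inE xl orbT.
by congr (Some (_, _)); apply/setP=> x; rewrite !inE orbCA orbA.
Qed.

Lemma spp_io_map (g : V -> smove V) b l :
  (forall v, sis_io (g v) = b) -> spp_io (map g l) = b * size l.
Proof.
move=> io_g; rewrite /spp_io count_map (eq_count (a2 := fun=> b)) //.
by case: b {io_g}; rewrite ?mul1n ?count_predT ?mul0n ?count_pred0.
Qed.

Lemma spp_io_map_selected (g : V -> smove V) b f :
  (forall v, sis_io (g v) = b) -> spp_io (map g (selected f)) <= k * b.
Proof.
by move=> io_g; rewrite (@spp_io_map g b _ io_g) mulnC leq_mul2r size_selected orbT.
Qed.

Section RedDeletion.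
Variables (R : {ffun 'I_k -> {set V}}) (j : 'I_k) (v : V).
Let R' := [ffun i => if i == j then R i :\ v else R i].

Let pooled_red_delR_sub : pooled_red R' \subset pooled_red R.
Proof.
apply/subsetP=> x /bigcupP[i _]; rewrite ffunE.
by case: ifP => _ => [/setD1P[_]|] xR; apply/bigcupP; exists i.
Qed.

Let pooled_red_delR_setD1 : pooled_red R' :\ v = pooled_red R :\ v.
Proof.
apply/eqP; rewrite eqEsubset setSD ?pooled_red_delR_sub //=.
apply/subsetP=> x /setD1P[xv /bigcupP[i _ xR]]; rewrite in_setD1 xv.
by apply/bigcupP; exists i; rewrite // ffunE; case: ifP; rewrite ?inE ?xv.
Qed.

(* The pooled red set loses [v] only if no other processor still holds it. *)
Lemma spp_run_pooled_red_delR c B : v \in R j -> #|pooled_red R'| <= c ->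
  exists2 sms, spp_run e c (pooled_red R, B) sms = Some (pooled_red R', B)
             & spp_io sms = 0.
Proof.
move=> vRj card_R'; have vR : v \in pooled_red R by apply/bigcupP; exists j.
have sub := pooled_red_delR_sub; have setD1_eq := pooled_red_delR_setD1.
case: (boolP (v \in pooled_red R')) => vR'.
  exists [::] => //; congr (Some (_, _)); apply/eqP.
  by rewrite eqEsubset sub -(setD1K vR) -setD1_eq subUset sub1set vR' subsetDl.
have R'_eq : pooled_red R' = pooled_red R :\ v.
  by apply/eqP; rewrite eqEsubset subsetD1 sub vR' -setD1_eq subsetDl.
by rewrite R'_eq in card_R' *; exists [:: SDelR v]; rewrite //= vR /= card_R'.
Qed.

End RedDeletion.

Lemma mpp_step_simulation r (c c' : mconf V k) m :
    mpp_step e c m = Some c' -> mvalid r c' ->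
  exists sms, spp_run e (k * r) (pooled_red c.1, c.2) sms = Some (pooled_red c'.1, c'.2)
              /\ spp_io sms <= k * mis_io m.
Proof.
case: c => R B; case: m => [f|f|f|j v|v] /=.
- case: ifP => // /andP[_ /forallP sel_f] [<-] /card_pooled_red /= card'.
  exists (map (@SStore V) (selected f)); rewrite spp_run_store; first split.
  + by congr (Some (_, _)); apply/setP=> x; rewrite !inE mem_selected.
  + by apply: (@spp_io_map_selected _ true).
  + move=> x; rewrite mem_selected => /existsP[j /eqP fj].
    by have := sel_f j; rewrite fj => xR; apply/bigcupP; exists j.
  + by rewrite (leq_trans _ card') // pooled_red_add_red subset_leq_card ?subsetUl.
- case: ifP => // /andP[_ /forallP sel_f] [<-] /card_pooled_red /= card'.
  rewrite pooled_red_add_red in card' *.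
  exists (map (@SLoad V) (selected f)).
  rewrite (@spp_run_add_red _ _ (fun _ v => v \in B)) //=; first split=> //.
  + by apply: (@spp_io_map_selected _ true).
  + by move=> A v ->.
  + by move=> x; rewrite mem_selected => /existsP[j /eqP fj]; have := sel_f j; rewrite fj.
- case: ifP => // /andP[_ /forallP sel_f] [<-] /card_pooled_red /= card'.
  rewrite pooled_red_add_red in card' *.
  exists (map (@SComp V) (selected f)).
  rewrite (@spp_run_add_red _ _ (fun A v => preds_in e v A)) //=; first split=> //.
  + by apply: (@spp_io_map_selected _ false).
  + by move=> A v ->.
  + by move=> A A' v; apply: preds_in_subset.
  move=> x; rewrite mem_selected => /existsP[i /eqP fi]; have := sel_f i; rewrite fi.
  by apply: preds_in_subset; apply/subsetP=> y yR; apply/bigcupP; exists i.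
- case: ifP => // vRj [<-] /card_pooled_red /= card'.
  have [sms run_sms io_sms] := spp_run_pooled_red_delR B vRj card'.
  by exists sms; rewrite io_sms.
- case: ifP => // vB [<-] /card_pooled_red /= card'.
  by exists [:: SDelB v]; rewrite /= vB card'.
Qed.

Lemma mpp_run_simulation r ms (c c' : mconf V k) : mpp_run e r c ms = Some c' ->
  exists sms, spp_run e (k * r) (pooled_red c.1, c.2) sms = Some (pooled_red c'.1, c'.2)
              /\ spp_io sms <= k * mpp_io ms.
Proof.
elim: ms c => [|m ms IH] c /=; first by case=> <-; exists [::].
case step_m: (mpp_step e c m) => [c1|] //; case: ifP => // valid_c1.
move=> /IH[sms2 [run2 io2]].
have [sms1 [run1 io1]] := mpp_step_simulation step_m valid_c1.
exists (sms1 ++ sms2); rewrite (spp_run_cat _ run1) run2; split=> //.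
by rewrite /spp_io count_cat mulnDr leq_add.
Qed.

Lemma mpp_strategy_simulation r (ms : seq (mmove V k)) : mpp_strategy e r ms ->
  exists2 sms, spp_strategy e (k * r) sms & spp_io sms <= k * mpp_io ms.
Proof.
rewrite /mpp_strategy; case run_ms: (mpp_run e r (minit V k) ms) => [c|] // term_c.
have [sms [run_sms io_sms]] := mpp_run_simulation run_ms.
have pooled_red0 : pooled_red (minit V k).1 = set0.
  by apply/setP=> x; rewrite inE; apply/bigcupP=> -[j _]; rewrite ffunE inE.
rewrite pooled_red0 in run_sms.
exists sms => //; rewrite /spp_strategy run_sms.
apply/forallP=> v; apply/implyP=> sink_v; have := implyP (forallP term_c v) sink_v.
case/orP=> [vB | /existsP[j vR]]; rewrite inE ?vB ?orbT //.
by apply/orP; left; apply/bigcupP; exists j.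
Qed.

End Simulation.

Local Open Scope ring_scope.

Theorem lemma5 (V : finType) (e : rel V) (k r L : nat) :
  dag e -> (0 < k)%N -> (0 < r)%N -> (0 < L)%N ->
  (forall ms : seq (smove V), spp_strategy e (k * r) ms -> (L <= spp_io ms)%N) ->
  forall ms : seq (mmove V k), mpp_strategy e r ms ->
    (L%:R / k%:R : rat) <= (mpp_io ms)%:R.
Proof.
move=> _ k_gt0 _ _ spp_lower ms /mpp_strategy_simulation[sms spp_sms io_sms].
have L_le : (L <= mpp_io ms * k)%N by rewrite mulnC (leq_trans (spp_lower _ spp_sms)).
by rewrite ler_pdivrMr ?ltr0n // -natrM ler_nat.
Qed.
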